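(* Let $r\ge5$, let $T$ be a $K_r$-tree, let $G$ be a graph, and let $S=V(G)\cap V(T)$. Then, for any run of the $(r-2)_*$-BP process on $T$ with seed set $S$, \[ \langle G\cup T\rangle_{K_r}\subseteq Q\cup T, \] where $Q$ is the complete graph on the vertex set $V(G)\cup\langle S;T\rangle_*$.
   Context: A graph $T$ is a $K_r$-tree if it is the union of copies $H_1,\dots,H_\vartheta$ of $K_r$ such that for each $1<i\le\vartheta$, $H_i$ shares exactly one edge with $H_1\cup\cdots\cup H_{i-1}$ (the common vertices being exactly the two endpoints of that edge). An edge of $T$ is internal if it lies in at least two of the $H_i$. The $(r-2)_*$-bootstrap percolation process on $T$ with seed set $S\subseteq V(T)$: initially the vertices of $S$ are infected; in each step, either (usual step) some uninfected vertex with at least $r-2$ infected neighbors in $T$ becomes infected; or else (special step), if no usual step is possible but for some internal edge $f$ there are two copies $H_i\ne H_j$ containing $f$ such that $H_i$ has $r-4$ infected vertices and $H_j$ has $1$ infected vertex, all these $r-3$ vertices not in $f$, then an arbitrarily chosen vertex $u\in f$ becomes infected; otherwise the process terminates. $\langle S;T\rangle_*$ denotes the set of eventually infected vertices. For a graph $F$, the $K_r$-dynamics repeatedly adds an edge whenever it is the only missing edge of some copy of $K_r$ on the vertex set of $F$; $\langle F\rangle_{K_r}$ is the final graph. *)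

(* Vertices live in an ambient finite type V; a graph is a
   vertex set together with a set of edges, each edge a 2-element set. *)
From mathcomp Require Import all_boot.
Set Implicit Arguments. Unset Strict Implicit. Unset Printing Implicit Defensive.

Section KrTrees.
Variable V : finType.

Definition complete_edges (W : {set V}) : {set {set V}} :=
  [set e : {set V} | (#|e| == 2) && (e \subset W)].

(* A K_r-tree given by its copies H_0, ..., H_(theta-1) of K_r (vertex sets
   of size r); H_i (i>0) meets the union of the previous ones in exactly two
   vertices x,y, and {x,y} is an edge of that previous union (lies in some
   earlier copy). *)
Definition is_Krtree (r theta : nat) (H : 'I_theta -> {set V}) : Prop :=
  0 < theta /\
  (forall i, #|H i| = r) /\
  (forall i : 'I_theta, 0 < i ->
     exists x y : V, x != y /\
       H i :&: (\bigcup_(j : 'I_theta | j < i) H j) = [set x; y] /\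
       exists j : 'I_theta, j < i /\ [set x; y] \subset H j).

Definition tverts theta (H : 'I_theta -> {set V}) : {set V} :=
  \bigcup_(i : 'I_theta) H i.

Definition tedges theta (H : 'I_theta -> {set V}) : {set {set V}} :=
  [set e : {set V} | (#|e| == 2) && [exists i : 'I_theta, e \subset H i]].

Definition tnbhd theta (H : 'I_theta -> {set V}) (u : V) : {set V} :=
  [set v | (v != u) && [exists i : 'I_theta, (u \in H i) && (v \in H i)]].

Definition internal theta (H : 'I_theta -> {set V}) (f : {set V}) : Prop :=
  #|f| = 2 /\ exists i j : 'I_theta, i != j /\ f \subset H i /\ f \subset H j.

Definition usual_step r theta (H : 'I_theta -> {set V}) (I I' : {set V}) : Prop :=
  exists u, [/\ u \in tverts H, u \notin I,
                r - 2 <= #|tnbhd H u :&: I| & I' = u |: I].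

Definition special_step r theta (H : 'I_theta -> {set V}) (I I' : {set V}) : Prop :=
  (~ exists J, usual_step r H I J) /\
  exists f : {set V}, internal H f /\
    (exists i j : 'I_theta, i != j /\ f \subset H i /\ f \subset H j /\
       #|H i :&: I| = r - 4 /\ #|H j :&: I| = 1 /\
       (H i :&: I) :&: f = set0 /\ (H j :&: I) :&: f = set0) /\
    exists u, u \in f /\ I' = u |: I.

Definition bp_step r theta (H : 'I_theta -> {set V}) (I I' : {set V}) : Prop :=
  usual_step r H I I' \/ special_step r H I I'.

Inductive bp_reach r theta (H : 'I_theta -> {set V}) (S : {set V}) : {set V} -> Prop :=
| bp_refl : bp_reach r H S S
| bp_trans I I' : bp_reach r H S I -> bp_step r H I I' -> bp_reach r H S I'.

(* I is the final infected set of some (terminated) run with seed set S,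
   i.e. a possible value of <S;T>_* *)
Definition bp_final r theta (H : 'I_theta -> {set V}) (S I : {set V}) : Prop :=
  bp_reach r H S I /\ forall I', ~ bp_step r H I I'.

(* K_r-dynamics on the graph (W, E): e is an edge of the final graph <F>_{K_r} *)
Inductive kr_closure (r : nat) (W : {set V}) (E : {set {set V}}) : {set V} -> Prop :=
| krc_base e : e \in E -> kr_closure r W E e
| krc_step (X e : {set V}) :
    X \subset W -> #|X| = r -> #|e| = 2 -> e \subset X ->
    (forall e' : {set V}, #|e'| = 2 -> e' \subset X -> e' != e -> kr_closure r W E e') ->
    kr_closure r W E e.

End KrTrees.

(* Adjacency in a K_r-tree is rigid: by induction on the number of copies, every
   clique on at least three vertices lies in a single copy, two copies share at
   most two vertices, and two non-adjacent vertices have at most two common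
   neighbours.  Let the K_r-dynamics add the edge ab inside an r-set X all of
   whose other pairs lie in Q ∪ T, and suppose ab does not, with a outside
   V(Q) = V(G) ∪ I.  Every vertex of X outside V(Q) is then T-adjacent to all
   of X except its partner in ab.  If X \ {a,b} ⊆ V(Q), then a has r-2 infected
   neighbours; so some c ∈ X \ {a,b} lies outside V(Q).  Then b ∈ V(Q), since
   otherwise X \ {a,b} together with a and with b would fill the same copy;
   and some d ≠ c of X \ {a,b} lies outside V(Q), since otherwise c has r-2
   infected neighbours.  Now X \ {b} fills a copy H_i and {b,c,d} a copy H_j,
   which carry r-4 and 1 infected vertices off the internal edge cd: a special
   step is still available, contradicting termination. *)

From mathcomp Require Import all_boot zify.
Set Implicit Arguments. Unset Strict Implicit. Unset Printing Implicit Defensive.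

Lemma cards3 (T : finType) (u v w : T) :
  u != v -> u != w -> v != w -> #|[set u; v; w]| = 3.
Proof. by move=> uv uw vw; rewrite -setUA cardsU1 cards2 vw !inE negb_or uv uw. Qed.

Lemma exists_other (T : finType) (K : {set T}) u :
  2 <= #|K| -> u \in K -> exists2 w, w \in K & w != u.
Proof.
move=> K2 uK; have : 0 < #|K :\ u| by move: K2; rewrite (cardsD1 u) uK.
by rewrite card_gt0 => /set0Pn[w]; rewrite !inE => /andP[]; exists w.
Qed.

Section KrTreeStructure.
Variables (V : finType) (theta : nat) (H : 'I_theta -> {set V}).

Definition prefix k := \bigcup_(j : 'I_theta | j < k) H j.

Definition adj_lt k (u v : V) : bool :=
  (u != v) && [exists i : 'I_theta, [&& i < k, u \in H i & v \in H i]].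

Lemma mem_prefixP k u : reflect (exists2 j : 'I_theta, j < k & u \in H j) (u \in prefix k).
Proof. by apply: (iffP bigcupP) => -[j ? ?]; exists j. Qed.

Lemma adj_ltC k u v : adj_lt k u v = adj_lt k v u.
Proof.
rewrite /adj_lt eq_sym; congr (_ && _).
by apply/existsP/existsP => -[i /and3P[? ? ?]]; exists i; apply/and3P.
Qed.

Lemma adj_lt_copy k (i : 'I_theta) u v :
  i < k -> u != v -> u \in H i -> v \in H i -> adj_lt k u v.
Proof. by move=> ik uv ui vi; rewrite /adj_lt uv; apply/existsP; exists i; rewrite ik ui vi. Qed.

Lemma adj_ltS k u v : adj_lt k u v -> adj_lt k.+1 u v.
Proof.
case/andP=> uv /existsP[i /and3P[ik ui vi]].
by apply: (adj_lt_copy (i := i)) => //; apply: ltnW.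
Qed.

Lemma adj_lt_fresh (k : 'I_theta) u v : u \notin prefix k ->
  adj_lt k.+1 u v -> (u \in H k) && (v \in H k).
Proof.
move=> uP /andP[_ /existsP[i /and3P[ik ui vi]]].
have ki : k <= i by rewrite leqNgt; apply: contra uP => ik'; apply/mem_prefixP; exists i.
have -> : k = i by apply/val_inj/eqP; rewrite eqn_leq ki -ltnS ik.
by rewrite ui vi.
Qed.

Hypothesis attach : forall i : 'I_theta, 0 < i -> exists x y : V,
  H i :&: prefix i = [set x; y] /\ exists2 j : 'I_theta, j < i & [set x; y] \subset H j.

(* Old vertices of the new copy H_k lie in its attaching edge, which an older copy contains. *)
Lemma adj_lt_old (k : 'I_theta) u v : u \in prefix k -> v \in prefix k ->
  adj_lt k.+1 u v -> adj_lt k u v.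
Proof.
move=> uP vP /andP[uv /existsP[i /and3P[ik ui vi]]].
have [ik'|ki] := ltnP i k; first exact: adj_lt_copy ik' uv ui vi.
have eik : i = k by apply/val_inj/eqP; rewrite eqn_leq ki -ltnS ik.
subst i; have k0 : 0 < k by case/mem_prefixP: uP => j /(leq_ltn_trans (leq0n j)).
have [x [y [Hxy [j jk xyj]]]] := attach k0.
have old w : w \in H k -> w \in prefix k -> w \in H j.
  by move=> wk wP; apply: (subsetP xyj); rewrite -Hxy inE wk.
by apply: (adj_lt_copy (i := j)) => //; apply: old.
Qed.

Lemma clique_lt k (K : {set V}) : k <= theta -> 3 <= #|K| ->
  {in K &, forall u v, u != v -> adj_lt k u v} -> exists2 i : 'I_theta, i < k & K \subset H i.
Proof.
elim: k K => [|k IH] K kt K3 Kcl.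
  have [u uK] : exists u, u \in K by apply/set0Pn; rewrite -card_gt0; apply: leq_trans K3.
  have [v vK vu] := exists_other (ltnW K3) uK.
  by case/andP: (Kcl _ _ vK uK vu) => _ /existsP[i /and3P[]].
pose L := Ordinal kt.
have [KP|] := boolP (K \subset prefix k).
  have [|i ik Ki] := IH K (ltnW kt) K3; last by exists i; first exact: ltnW.
  move=> u v uK vK uv.
  by apply: (adj_lt_old (k := L)) => //; [apply: (subsetP KP) .. | apply: Kcl].
case/subsetPn => u uK uP; exists L => //.
have nbr_L v : v \in K -> v != u -> (u \in H L) && (v \in H L).
  by move=> vK vu; apply: (adj_lt_fresh (k := L) uP); apply: Kcl; rewrite // eq_sym.
have [w wK wu] := exists_other (ltnW K3) uK.
apply/subsetP => v vK; have [->|vu] := eqVneq v u.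
  by case/andP: (nbr_L w wK wu).
by case/andP: (nbr_L v vK vu).
Qed.

Definition common_nbrs k x y := [set u | adj_lt k x u && adj_lt k y u].

Lemma common_nbrs_lt k x y : k <= theta -> x != y ->
  3 <= #|common_nbrs k x y| -> adj_lt k x y.
Proof.
elim: k x y => [|k IH] x y kt xy C3.
  have [u] : exists u, u \in common_nbrs 0 x y.
    by apply/set0Pn; rewrite -card_gt0; apply: leq_trans C3.
  by rewrite inE => /andP[/andP[_ /existsP[i /and3P[]]]].
pose L := Ordinal kt.
apply/negPn/negP => nxy.
have old u : u \in common_nbrs k.+1 x y -> u \in prefix k.
  rewrite inE => /andP[xu yu]; apply/negPn/negP => uP; case/negP: nxy.
  rewrite adj_ltC in xu; rewrite adj_ltC in yu.
  case/andP: (adj_lt_fresh (k := L) uP xu) => _ xL.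
  case/andP: (adj_lt_fresh (k := L) uP yu) => _ yL.
  exact: (adj_lt_copy (i := L) (ltnSn k) xy xL yL).
have [u0 u0C] : exists u, u \in common_nbrs k.+1 x y.
  by apply/set0Pn; rewrite -card_gt0; apply: leq_trans C3.
have L0 : 0 < L by case/mem_prefixP: (old _ u0C) => j /(leq_ltn_trans (leq0n j)).
have [x0 [y0 [HL _]]] := attach L0.
have ends_old p : p \in [set x; y] -> p \in prefix k.
  move=> pxy; apply/negPn/negP => pP.
  suff : common_nbrs k.+1 x y \subset [set x0; y0].
    by move/subset_leq_card; rewrite cards2; lia.
  apply/subsetP => u uC; rewrite -HL inE old // andbT.
  have pu : adj_lt k.+1 p u by move: uC; rewrite inE; case/set2P: pxy => -> /andP[].
  by case/andP: (adj_lt_fresh (k := L) pP pu).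
case/negP: nxy; apply/adj_ltS/IH => //; first exact: ltnW.
apply: leq_trans C3 _; apply/subset_leq_card/subsetP => u uC.
have [xP yP] := (ends_old x (set21 x y), ends_old y (set22 x y)).
have uP := old _ uC; move: uC; rewrite !inE => /andP[xu yu].
by rewrite (adj_lt_old (k := L) xP uP xu) (adj_lt_old (k := L) yP uP yu).
Qed.

Lemma copies_inter3 (i j : 'I_theta) : 3 <= #|H i :&: H j| -> i = j.
Proof.
wlog ij : i j / i < j => [hwlog|].
  by case: (ltngtP i j) => [/hwlog//|ji|/val_inj//]; rewrite setIC => /(hwlog _ _ ji).
have [x [y [Hxy _]]] := attach (leq_ltn_trans (leq0n i) ij).
suff : H i :&: H j \subset [set x; y].
  by move/subset_leq_card; rewrite cards2; lia.
by rewrite -Hxy setIC setIS //; apply/subsetP => w wi; apply/mem_prefixP; exists i.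
Qed.

Local Notation tadj := (adj_lt theta).

Lemma mem_complete_tedges2 (W : {set V}) u v : u != v ->
  ([set u; v] \in complete_edges W :|: tedges H) = ((u \in W) && (v \in W)) || tadj u v.
Proof.
move=> uv; rewrite in_setU !inE cards2 uv subUset !sub1set /=; congr (_ || _).
rewrite /adj_lt uv; apply/existsP/existsP => -[i].
  by rewrite subUset !sub1set => /andP[ui vi]; exists i; rewrite ltn_ord ui vi.
by case/and3P=> _ ui vi; exists i; rewrite subUset !sub1set ui vi.
Qed.

Definition tclique (K : {set V}) := {in K &, forall u v, u != v -> tadj u v}.

Lemma tnbhdE u v : (v \in tnbhd H u) = tadj u v.
Proof.
rewrite inE /adj_lt eq_sym; congr (_ && _).
apply/existsP/existsP => -[i].
  by case/andP=> ui vi; exists i; rewrite ltn_ord ui vi.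
by case/and3P=> _ ui vi; exists i; rewrite ui vi.
Qed.

Lemma tadj_tverts u v : tadj u v -> u \in tverts H.
Proof. by case/andP=> _ /existsP[i /and3P[_ ui _]]; apply/bigcupP; exists i. Qed.

Lemma tadj_copy (i : 'I_theta) u v : u != v -> u \in H i -> v \in H i -> tadj u v.
Proof. exact: adj_lt_copy. Qed.

Lemma tclique_copy (i : 'I_theta) (K : {set V}) : K \subset H i -> tclique K.
Proof. by move=> Ki u v uK vK uv; apply: (tadj_copy uv); apply: (subsetP Ki). Qed.

Lemma tcliqueU1 w (K : {set V}) :
  tclique K -> (forall x, x \in K -> tadj w x) -> tclique (w |: K).
Proof.
move=> Kcl wK u v; rewrite !in_setU1 => /predU1P[->|uK] /predU1P[->|vK] uv.
- by rewrite eqxx in uv.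
- exact: wK.
- by rewrite adj_ltC; apply: wK.
- exact: Kcl.
Qed.

Lemma tclique_sub_copy (K : {set V}) : 3 <= #|K| -> tclique K -> exists i, K \subset H i.
Proof. by move=> K3 Kcl; have [i _ Ki] := clique_lt (leqnn theta) K3 Kcl; exists i. Qed.

Lemma tclique_of_dominators (D K : {set V}) : 3 <= #|D| ->
  (forall w x, w \in D -> x \in K -> x != w -> tadj w x) -> tclique K.
Proof.
move=> D3 dom u v uK vK uv.
have [uD|uD] := boolP (u \in D); first by apply: dom; rewrite // eq_sym.
have [vD|vD] := boolP (v \in D); first by rewrite adj_ltC; apply: dom.
apply: common_nbrs_lt uv _ => //; apply: leq_trans D3 _; apply/subset_leq_card/subsetP => w wD.
have uw : u != w by apply: contraNneq uD => ->.
have vw : v != w by apply: contraNneq vD => ->.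
by rewrite inE ![tadj _ w]adj_ltC !dom.
Qed.

Lemma mem_copy_tadj3 (i : 'I_theta) w x y z : x != y -> x != z -> y != z ->
  [set x; y; z] \subset H i -> tadj w x -> tadj w y -> tadj w z -> w \in H i.
Proof.
move=> xy xz yz xyzi wx wy wz.
have xyz3 := cards3 xy xz yz.
have card4 : 3 <= #|w |: [set x; y; z]| by rewrite -xyz3 subset_leq_card // subsetUr.
have cl4 : tclique (w |: [set x; y; z]).
  by apply: tcliqueU1 (tclique_copy xyzi) _ => u; rewrite !inE => /orP[/orP[]|] /eqP->.
have [k wk] := tclique_sub_copy card4 cl4.
suff <- : k = i by apply: (subsetP wk); rewrite setU11.
apply: copies_inter3; rewrite -xyz3 subset_leq_card // subsetI xyzi andbT.
exact: subset_trans (subsetUr _ _) wk.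
Qed.

End KrTreeStructure.

Section Percolation.
Variables (V : finType) (r theta : nat) (H : 'I_theta -> {set V}) (VG I : {set V}).
Hypothesis attach : forall i : 'I_theta, 0 < i -> exists x y : V,
  H i :&: prefix H i = [set x; y] /\ exists2 j : 'I_theta, j < i & [set x; y] \subset H j.
Hypothesis r5 : 5 <= r.
Hypothesis seed_infected : VG :&: tverts H \subset I.
Hypothesis I_final : forall I', ~ bp_step r H I I'.

Local Notation tadj := (adj_lt H theta).
Local Notation Z := (VG :|: I).

Lemma no_usual_step u : u \notin I -> #|tnbhd H u :&: I| < r - 2.
Proof.
move=> uI; rewrite ltnNge; apply/negP => big.
have [v] : exists v, v \in tnbhd H u :&: I.
  by apply/set0Pn; rewrite -card_gt0; apply: leq_trans big; lia.
rewrite inE tnbhdE => /andP[uv _].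
by apply: (I_final (I' := u |: I)); left; exists u; split => //; apply: tadj_tverts uv.
Qed.

Lemma no_special_step (i j : 'I_theta) c d : i != j -> c != d ->
  [set c; d] \subset H i -> [set c; d] \subset H j -> c \notin I -> d \notin I ->
  #|H i :&: I| = r - 4 -> #|H j :&: I| = 1 -> False.
Proof.
move=> ij cd cdi cdj cI dI Ii Ij.
have avoid_f (A : {set V}) : A :&: I :&: [set c; d] = set0.
  apply/setP => w; rewrite !inE; apply/negP => /andP[/andP[_ wI] /orP[]/eqP wcd].
    by rewrite wcd (negbTE cI) in wI.
  by rewrite wcd (negbTE dI) in wI.
apply: (I_final (I' := c |: I)); right; split.
  by case=> J uJ; apply: (I_final (I' := J)); left.
exists [set c; d]; split; first by split; [rewrite cards2 cd | exists i, j].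
by split; [exists i, j; rewrite !avoid_f | exists c; rewrite set21].
Qed.

Lemma infected_of_tadj x y : x \in Z -> tadj x y -> x \in I.
Proof.
case/setUP => // xG /tadj_tverts xT.
by apply: (subsetP seed_infected); rewrite inE xG.
Qed.

Lemma card_Z_nbrs_lt p (S : {set V}) : p \notin I ->
  (forall x, x \in S -> (x \in Z) && tadj p x) -> #|S| < r - 2.
Proof.
move=> pI SZ; apply: leq_ltn_trans (no_usual_step pI); apply/subset_leq_card/subsetP => x xS.
have /andP[xZ px] := SZ x xS.
by rewrite inE tnbhdE px (infected_of_tadj xZ (y := p)) // adj_ltC.
Qed.

Section Configuration.
Variables (X : {set V}) (a b : V).
Hypotheses (X_r : #|X| = r) (aX : a \in X) (bX : b \in X) (ab : a != b).
Hypothesis X_covered : forall u v, u \in X :\: [set a; b] -> v \in X -> u != v ->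
  ((u \in Z) && (v \in Z)) || tadj u v.
Hypotheses (not_tadj_ab : ~~ tadj a b) (aZ : a \notin Z).

Local Notation R := (X :\: [set a; b]).

Lemma memR x : (x \in R) = [&& x != a, x != b & x \in X].
Proof. by rewrite !inE negb_or andbA. Qed.

Lemma card_R : #|R| = r - 2.
Proof. by rewrite cardsDS ?X_r ?cards2 ?ab // subUset !sub1set aX bX. Qed.

Lemma tadj_outside w x : w \in R -> w \notin Z -> x \in X -> x != w -> tadj w x.
Proof.
move=> wR wZ xX xw; have wx : w != x by rewrite eq_sym.
by move: (X_covered wR xX wx); rewrite (negbTE wZ).
Qed.

Lemma tadj_end p x : p \in [set a; b] -> p \notin Z -> x \in R -> tadj p x.
Proof.
move=> pab pZ xR; have pX : p \in X by case/set2P: pab => ->.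
have xp : x != p by apply: contraTneq xR => ->; rewrite inE pab.
by rewrite adj_ltC; move: (X_covered xR pX xp); rewrite (negbTE pZ) andbF.
Qed.

Lemma exists_outside_R : exists2 c, c \in R & c \notin Z.
Proof.
have [/exists_inP//|/exists_inPn RZ] := boolP [exists c in R, c \notin Z].
have aI : a \notin I by apply: contra aZ => aI; rewrite inE aI orbT.
suff : #|R| < r - 2 by rewrite card_R ltnn.
apply: (card_Z_nbrs_lt aI) => x xR.
by rewrite tadj_end ?set21 // andbT; apply/negPn/RZ.
Qed.

Lemma b_in_Z c : c \in R -> c \notin Z -> b \in Z.
Proof.
move=> cR cZ; apply/negPn/negP => bZ; case/negP: not_tadj_ab.
have R3 : 3 <= #|R| by rewrite card_R; lia.
have Rcl : tclique H R.
  apply: (tclique_of_dominators attach (D := [set a; b; c])).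
    have := cR; rewrite memR => /and3P[ca cb _].
    by rewrite cards3 // [_ == c]eq_sym.
  move=> w x + xR; rewrite !inE => /orP[/orP[]|] /eqP-> xw.
  - by apply: tadj_end; rewrite ?set21.
  - by apply: tadj_end; rewrite ?set22.
  - by apply: tadj_outside => //; case/setDP: xR.
have copy_with p : p \in [set a; b] -> p \notin Z -> exists i, p |: R \subset H i.
  move=> pab pZ; apply: (tclique_sub_copy attach).
    by apply: leq_trans R3 (subset_leq_card (subsetUr _ _)).
  by apply: tcliqueU1 Rcl _ => x; apply: tadj_end.
have [i aRi] := copy_with a (set21 a b) aZ.
have [j bRj] := copy_with b (set22 a b) bZ.
have ij : i = j.
  apply: (copies_inter3 attach); apply: leq_trans R3 (subset_leq_card _).
  rewrite subsetI (subset_trans (subsetUr [set a] R) aRi).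
  exact: subset_trans (subsetUr [set b] R) bRj.
rewrite -ij in bRj; apply: tadj_copy ab _ _.
  by apply: (subsetP aRi); rewrite setU11.
by apply: (subsetP bRj); rewrite setU11.
Qed.

Lemma exists_outside_RD1 c : c \in R -> c \notin Z -> exists2 d, d \in R :\ c & d \notin Z.
Proof.
move=> cR cZ.
have [/exists_inP//|/exists_inPn RZ] := boolP [exists d in R :\ c, d \notin Z].
have cI : c \notin I by apply: contra cZ => cI; rewrite inE cI orbT.
have := cR; rewrite memR => /and3P[_ cb cX].
have bZ := b_in_Z cR cZ.
have c_b : tadj c b by apply: tadj_outside; rewrite // eq_sym.
have bRc : b \notin R :\ c by rewrite in_setD1 memR eqxx !andbF.
have := cardsD1 c R; rewrite cR card_R => RcE.
suff : #|b |: (R :\ c)| < r - 2 by rewrite cardsU1 bRc RcE ltnn.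
apply: (card_Z_nbrs_lt cI) => x; rewrite in_setU1 => /predU1P[->|xRc].
  by rewrite bZ c_b.
have /setD1P[xc xR] := xRc.
have := xR; rewrite memR => /and3P[_ _ xX].
by rewrite (negbNE (RZ x xRc)) tadj_outside.
Qed.

Section TwoOutside.
Variables c d : V.
Hypotheses (cR : c \in R) (dR : d \in R) (dc : d != c) (cZ : c \notin Z) (dZ : d \notin Z).

Local Notation R' := (R :\: [set c; d]).

Let bZ : b \in Z := b_in_Z cR cZ.
Let cI : c \notin I := contra (subsetP (subsetUr VG I) c) cZ.
Let dI : d \notin I := contra (subsetP (subsetUr VG I) d) dZ.
Let c_tadj x : x \in X -> x != c -> tadj c x := tadj_outside cR cZ.
Let d_tadj x : x \in X -> x != d -> tadj d x := tadj_outside dR dZ.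
Let cb : c != b. Proof. by move: cR; rewrite memR => /and3P[]. Qed.
Let db : d != b. Proof. by move: dR; rewrite memR => /and3P[]. Qed.
Let b_tadj_c : tadj b c. Proof. by rewrite adj_ltC c_tadj // eq_sym. Qed.
Let b_tadj_d : tadj b d. Proof. by rewrite adj_ltC d_tadj // eq_sym. Qed.
Let bI : b \in I := infected_of_tadj bZ b_tadj_c.

Let memR' x : x \in R' -> [/\ x != c, x != d & x \in R].
Proof. by rewrite in_setD !inE negb_or => /andP[/andP[-> ->] ->]. Qed.

Lemma exists_copy_XD1 : exists i, X :\ b \subset H i.
Proof.
have := cR; rewrite memR => /and3P[ca _ cX].
have := dR; rewrite memR => /and3P[da _ dX].
apply: (tclique_sub_copy attach).
  by move: r5; rewrite -X_r (cardsD1 b X) bX add1n ltnS; apply: ltnW.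
apply: (tclique_of_dominators attach (D := [set a; c; d])).
  by rewrite cards3 // ?dc // eq_sym.
move=> w x + /setD1P[xb xX]; rewrite !inE => /orP[/orP[]|] /eqP-> xw.
- by apply: tadj_end; rewrite ?set21 // memR xw xb.
- exact: c_tadj.
- exact: d_tadj.
Qed.

Section InCopy.
Variable i : 'I_theta.
Hypothesis Xb_i : X :\ b \subset H i.

Lemma R_sub_copy : R \subset H i.
Proof.
by apply: subset_trans Xb_i; apply/subsetP => x; rewrite memR in_setD1 => /and3P[_ -> ->].
Qed.

Lemma b_notin_copy : b \notin H i.
Proof.
apply: contra not_tadj_ab => bi; apply: tadj_copy ab _ bi.
by apply: (subsetP Xb_i); rewrite in_setD1 ab aX.
Qed.

Lemma not_tadj_b_R' x : x \in R' -> ~~ tadj b x.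
Proof.
move=> xR'; apply: contra b_notin_copy => bx.
have [xc xd xR] := memR' xR'.
apply: (mem_copy_tadj3 attach _ _ _ _ b_tadj_c b_tadj_d bx); rewrite 1?eq_sym //.
by rewrite !subUset !sub1set !(subsetP R_sub_copy).
Qed.

Lemma R'_infected : R' \subset I.
Proof.
apply/subsetP => x xR'; have [_ _ xR] := memR' xR'.
have := xR; rewrite memR => /and3P[_ xb _].
have := X_covered xR bX xb; rewrite adj_ltC (negbTE (not_tadj_b_R' xR')) orbF.
case/andP=> xZ _; apply: (infected_of_tadj xZ (y := a)).
by rewrite adj_ltC tadj_end ?set21.
Qed.

Lemma card_R' : #|R'| = r - 4.
Proof.
have cd : c != d by rewrite eq_sym.
by rewrite cardsDS ?card_R ?cards2 ?cd -?subnDA // subUset !sub1set cR dR.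
Qed.

Lemma tnbhd_c_infected : tnbhd H c :&: I = b |: R'.
Proof.
have bR' : b \notin R' by rewrite in_setD memR eqxx /= !andbF.
apply/eqP; rewrite eq_sym eqEcard; apply/andP; split.
  apply/subsetP => x; rewrite in_setU1 => /predU1P[->|xR'].
    by rewrite in_setI bI tnbhdE adj_ltC b_tadj_c.
  have [xc _ xR] := memR' xR'.
  have := xR; rewrite memR => /and3P[_ _ xX].
  by rewrite in_setI tnbhdE c_tadj // (subsetP R'_infected).
have := no_usual_step cI; rewrite cardsU1 bR' card_R'.
by move: r5; clear; lia.
Qed.

Lemma copy_infected : H i :&: I = R'.
Proof.
apply/eqP; rewrite eqEsubset subsetI R'_infected andbT; apply/andP; split; last first.
  exact: subset_trans (subsetDl _ _) R_sub_copy.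
apply/subsetP => x /setIP[xi xI].
have ci : c \in H i by apply: (subsetP R_sub_copy).
have xc : x != c by apply: contraNneq cI => <-.
have : x \in tnbhd H c :&: I by rewrite in_setI tnbhdE xI (tadj_copy _ ci xi) // eq_sym.
rewrite tnbhd_c_infected in_setU1 => /predU1P[xb|//].
by move: b_notin_copy; rewrite -xb xi.
Qed.

End InCopy.

Lemma two_outside_absurd : False.
Proof.
have [i Xb_i] := exists_copy_XD1.
have cdi : [set c; d] \subset H i.
  by apply: subset_trans (R_sub_copy Xb_i); rewrite subUset !sub1set cR dR.
have cd : c != d by rewrite eq_sym.
have [j bcdj] : exists j, [set b; c; d] \subset H j.
  apply: (tclique_sub_copy attach); first by rewrite cards3 // eq_sym.
  rewrite -setUA; apply: tcliqueU1 (tclique_copy cdi) _.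
  by move=> x /set2P[]->.
have bj : b \in H j by apply: (subsetP bcdj); rewrite !inE eqxx.
have cdj : [set c; d] \subset H j by apply: subset_trans bcdj; rewrite -setUA subsetUr.
have ij : i != j by apply: contraNneq (b_notin_copy Xb_i) => ->.
have HjI : H j :&: I = [set b].
  apply/eqP; rewrite eqEsubset sub1set in_setI bj bI !andbT.
  apply/subsetP => x /setIP[xj xI].
  have cj : c \in H j by apply: (subsetP cdj); rewrite set21.
  have xc : x != c by apply: contraNneq cI => <-.
  have : x \in tnbhd H c :&: I by rewrite in_setI tnbhdE xI (tadj_copy _ cj xj) // eq_sym.
  rewrite (tnbhd_c_infected Xb_i) in_setU1 => /predU1P[->|xR']; first exact: set11.
  have [_ _] := memR' xR'; rewrite memR => /and3P[_ xb _].
  by case/negP: (not_tadj_b_R' Xb_i xR'); apply: tadj_copy bj xj; rewrite eq_sym.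
apply: (no_special_step ij cd cdi cdj cI dI); last by rewrite HjI cards1.
by rewrite (copy_infected Xb_i) card_R'.
Qed.

End TwoOutside.

Lemma configuration_absurd : False.
Proof.
have [c cR cZ] := exists_outside_R.
have [d /setD1P[dc dR] dZ] := exists_outside_RD1 cR cZ.
exact: two_outside_absurd cR dR dc cZ dZ.
Qed.

End Configuration.

Lemma Kr_completion_step (X : {set V}) a b :
  #|X| = r -> a \in X -> b \in X -> a != b ->
  (forall e : {set V}, #|e| = 2 -> e \subset X -> e != [set a; b] ->
     e \in complete_edges Z :|: tedges H) ->
  [set a; b] \in complete_edges Z :|: tedges H.
Proof.
move=> Xr; wlog aZ : a b / a \notin Z => [hwlog aX bX ab covered|].
  have [aZ|/hwlog] := boolP (a \in Z); last exact.
  have [bZ|bZ] := boolP (b \in Z).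
    by rewrite in_setU inE cards2 ab subUset !sub1set aZ bZ.
  rewrite setUC; apply: hwlog => //; first by rewrite eq_sym.
  by move=> e e2 eX; rewrite setUC; apply: covered.
move=> aX bX ab covered; rewrite mem_complete_tedges2 // (negbTE aZ) /=.
apply/negPn/negP => nab; apply: (configuration_absurd Xr aX bX ab _ nab aZ).
move=> p q pR qX pq; rewrite -mem_complete_tedges2 //; apply: covered.
- by rewrite cards2 pq.
- by rewrite subUset !sub1set qX andbT; case/setDP: pR.
- by apply: contraTneq pR => <-; rewrite in_setD set21.
Qed.

End Percolation.

Lemma bp_reach_sub (V : finType) r theta (H : 'I_theta -> {set V}) S I :
  bp_reach r H S I -> S \subset I.
Proof.
elim=> [|J J' _ SJ [[u [_ _ _ ->]]|[_ [_ [_ [_ [u [_ ->]]]]]]]]; first exact: subxx.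
  by rewrite (subset_trans SJ) ?subsetUr.
by rewrite (subset_trans SJ) ?subsetUr.
Qed.

Lemma Krtree_attach (V : finType) r theta (H : 'I_theta -> {set V}) :
  is_Krtree r H -> forall i : 'I_theta, 0 < i -> exists x y : V,
    H i :&: prefix H i = [set x; y] /\ exists2 j : 'I_theta, j < i & [set x; y] \subset H j.
Proof.
case=> _ [_ attach] i i0; have [x [y [_ [Hxy [j [ji xyj]]]]]] := attach i i0.
by exists x, y; split => //; exists j.
Qed.

Theorem lemma6p3 (V : finType) (r theta : nat) (H : 'I_theta -> {set V})
    (VG : {set V}) (EG : {set {set V}}) :
  5 <= r ->
  is_Krtree r H ->
  (forall e, e \in EG -> #|e| = 2 /\ e \subset VG) ->
  forall I : {set V}, bp_final r H (VG :&: tverts H) I ->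
  forall e : {set V},
    kr_closure r (VG :|: tverts H) (EG :|: tedges H) e ->
    e \in complete_edges (VG :|: I) :|: tedges H.
Proof.
move=> r5 /Krtree_attach attach EG_VG I [/bp_reach_sub seed_infected I_final] e.
elim=> {e} [e /setUP[/EG_VG[e2 eVG]|eT]|X e _ Xr e2 eX _ IH].
- by rewrite in_setU inE e2 eqxx (subset_trans eVG) // subsetUl.
- by rewrite in_setU eT orbT.
have /cards2P[a [b [ab eab]]] : #|e| == 2 by rewrite e2.
move: eX; rewrite eab subUset !sub1set => /andP[aX bX].
apply: (Kr_completion_step attach r5 seed_infected I_final Xr aX bX ab).
by move=> e' e'2 e'X e'e; apply: IH; rewrite ?eab.
Qed.
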